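(* Let $\mathcal{G}$ be a multi-layer graph with $l$ layers, $d,k\in\mathbb{N}$ with $k\ge1$, and $\mathcal{R}$ a collection of exactly $k$ subsets of $V(\mathcal{G})$. Let $L\subseteq\{1,\dots,l\}$. If $C^d_L(\mathcal{G})$ does not satisfy $|\mathsf{Cov}((\mathcal{R}-\{C^*(\mathcal{R})\})\cup\{C^d_L(\mathcal{G})\})|\ge(1+\frac1k)|\mathsf{Cov}(\mathcal{R})|$, then no descendant $C^d_{L'}(\mathcal{G})$ of $C^d_L(\mathcal{G})$ satisfies $|\mathsf{Cov}((\mathcal{R}-\{C^*(\mathcal{R})\})\cup\{C^d_{L'}(\mathcal{G})\})|\ge(1+\frac1k)|\mathsf{Cov}(\mathcal{R})|$.
   Context: A multi-layer graph $\mathcal{G}=(V,E_1,\dots,E_l)$ consists of a finite vertex set $V$ and edge sets $E_i$ of simple undirected graphs $G_i=(V,E_i)$. A graph is $d$-dense if every vertex has degree at least $d$; the $d$-coherent core $C^d_L(\mathcal{G})$ is the unique maximal $S\subseteq V$ such that the induced subgraph $G_i[S]$ is $d$-dense for all $i\in L$ (with $C^d_\emptyset(\mathcal{G})=V$). For a collection $\mathcal{R}$ of sets, $\mathsf{Cov}(\mathcal{R})=\bigcup_{R\in\mathcal{R}}R$; for $C'\in\mathcal{R}$, $\Delta(\mathcal{R},C')=C'-\mathsf{Cov}(\mathcal{R}-\{C'\})$; $C^*(\mathcal{R})$ is a fixed element of $\mathcal{R}$ minimizing $|\Delta(\mathcal{R},C')|$. Bottom-up search tree: $C^d_L(\mathcal{G})$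 is the parent of $C^d_{L'}(\mathcal{G})$ if $L'=L\cup\{\ell\}$ with $\ell>\max(L)$ ($\max(\emptyset)=-\infty$); descendants are obtained by iterating the child relation, i.e., $L'\supsetneq L$ with every element of $L'-L$ larger than $\max(L)$. *)

From mathcomp Require Import all_boot all_order all_algebra.
Set Implicit Arguments. Unset Strict Implicit. Unset Printing Implicit Defensive.

(* A multi-layer graph on vertex set V (a finType) with l layers is given by
   E : 'I_l -> rel V; layer i is the simple graph (V, E i). Layers are
   indexed 0..l-1 (order-preserving relabelling of 1..l). *)

Definition coherent {V : finType} {l : nat} (E : 'I_l -> rel V)
  (L : {set 'I_l}) (d : nat) (S : {set V}) : bool :=
  [forall i in L, forall v in S, d <= #|[set u in S | E i v u]|].

(* d-coherent core: the maximal coherent set = union of all coherent sets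
   (with L = set0 this is the whole vertex set). *)
Definition core {V : finType} {l : nat} (E : 'I_l -> rel V)
  (d : nat) (L : {set 'I_l}) : {set V} :=
  \bigcup_(S : {set V} | coherent E L d S) S.

Definition Cov {V : finType} (R : {set {set V}}) : {set V} :=
  \bigcup_(X in R) X.

Definition Delta {V : finType} (R : {set {set V}}) (C : {set V}) : {set V} :=
  C :\: Cov (R :\ C).

Definition improves {V : finType} (R : {set {set V}}) (cs : {set V})
  (k : nat) (C : {set V}) : Prop :=
  ((1 + 1 / k%:R) * (#|Cov R|)%:R <= (#|Cov ((R :\ cs) :|: [set C])|)%:R :> rat)%R.

(* L' is a descendant of L in the bottom-up search tree *)
Definition descendant {l : nat} (L L' : {set 'I_l}) : Prop :=
  L \proper L' /\ forall x, x \in L' :\: L -> forall y, y \in L -> (y < x)%N.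

From mathcomp Require Import all_boot all_order all_algebra.
Set Implicit Arguments. Unset Strict Implicit. Unset Printing Implicit Defensive.
Import Order.TTheory GRing.Theory Num.Theory.

(* Requiring density in more layers can only shrink the coherent core, so the
   core of a descendant is contained in the core of its ancestor; replacing
   C* by a smaller set cannot enlarge the cover, hence cannot create an
   improvement. *)

Lemma coherent_subset (V : finType) (l : nat) (E : 'I_l -> rel V)
    (d : nat) (L L' : {set 'I_l}) (S : {set V}) :
  L \subset L' -> coherent E L' d S -> coherent E L d S.
Proof.
move=> sLL' /forallP cohS; apply/forallP => i; apply/implyP => iL.
exact: (implyP (cohS i) (subsetP sLL' i iL)).
Qed.

Lemma core_antimono (V : finType) (l : nat) (E : 'I_l -> rel V)
    (d : nat) (L L' : {set 'I_l}) :
  L \subset L' -> core E d L' \subset core E d L.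
Proof.
move=> sLL'; apply/subsetP => x /bigcupP [S cohS xS].
by apply/bigcupP; exists S => //; exact: coherent_subset cohS.
Qed.

Lemma Cov_setU1S (V : finType) (A : {set {set V}}) (X Y : {set V}) :
  X \subset Y -> Cov (A :|: [set X]) \subset Cov (A :|: [set Y]).
Proof.
move=> sXY; apply/subsetP => x /bigcupP [Z].
rewrite in_setU in_set1 => /orP [AZ xZ | /eqP -> xX].
  by apply/bigcupP; exists Z; rewrite // in_setU AZ.
by apply/bigcupP; exists Y; rewrite ?in_setU ?set11 ?orbT ?(subsetP sXY).
Qed.

Lemma improvesS (V : finType) (R : {set {set V}}) (cs : {set V}) (k : nat)
    (C C' : {set V}) :
  C \subset C' -> improves R cs k C -> improves R cs k C'.
Proof.
move=> sCC' impC; apply: (le_trans impC).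
by rewrite ler_nat subset_leq_card // Cov_setU1S.
Qed.

Theorem lemma2 (V : finType) (l : nat) (E : 'I_l -> rel V)
  (E_sym : forall i, symmetric (E i)) (E_irr : forall i, irreflexive (E i))
  (d k : nat) (R : {set {set V}}) (cs : {set V})
  (hk : (1 <= k)%N) (hR : #|R| = k)
  (hcs : cs \in R)
  (hmin : forall C', C' \in R -> (#|Delta R cs| <= #|Delta R C'|)%N)
  (L : {set 'I_l}) :
  ~ improves R cs k (core E d L) ->
  forall L' : {set 'I_l}, descendant L L' -> ~ improves R cs k (core E d L').
Proof.
move=> not_impL L' [/proper_sub sLL' _] impL'; apply: not_impL.
exact: improvesS (core_antimono E d sLL') impL'.
Qed.
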